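(* Let $P,Q\in\mathbb{H}[q_1,q_2]$ and $a,b\in\mathbb{H}$. (1) If $P=(q_1-a)*P_1$ and $Q=(q_1-a)*Q_1$ for some $P_1,Q_1\in\mathbb{H}[q_1,q_2]$, then ${\rm Res}(P,Q;q_1)\equiv0$. (2) If $P=(q_2-b)*P_2$ and $Q=(q_2-b)*Q_2$ for some $P_2,Q_2\in\mathbb{H}[q_1,q_2]$, then ${\rm Res}(P,Q;q_2)\equiv0$.
   Context: $\mathbb{H}$ denotes the quaternions. A slice regular polynomial in two quaternionic variables is a function $\mathbb{H}^2\to\mathbb{H}$ of the form $P(q_1,q_2)=\sum_{n=0}^{N}\sum_{m=0}^{M}q_1^nq_2^ma_{n,m}$ with $a_{n,m}\in\mathbb{H}$ (coefficients on the right); $\deg_{q_1}P$, $\deg_{q_2}P$ are the degrees in $q_1$, $q_2$. The set of these is $\mathbb{H}[q_1,q_2]$, and $\mathbb{H}[q]$ denotes the analogous one-variable polynomials $\sum q^na_n$. The $*$-product is defined by $\big(\sum q_1^nq_2^ma_{n,m}\big)*\big(\sum q_1^nq_2^mb_{n,m}\big)=\sum_{n,m}q_1^nq_2^m\sum_{r\le n,s\le m}a_{r,s}b_{n-r,m-s}$ (and analogously in one variable); $(\mathbb{H}[q],+,* )$ is a left and right Ore domain and we let $\mathcal{L}$ be its skew field of quotients. Every $P\in\mathbb{H}[q_1,q_2]$ can be written as $P=\sum_{k=0}^{n}q_1^kP_k(q_2)$ with $P_k\in\mathbb{H}[q_2]$, and as $P=\sum_{k=0}^{r}q_2^k*\tilde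 P_k(q_1)$ with $\tilde P_k\in\mathbb{H}[q_1]$. Dieudonné determinant: for a skew field $(\mathbb F,+,\star)$, let $\overline{\mathbb F}^\star$ be the abelianization of its multiplicative group; ${\rm Det}^\star_N$ is the unique homomorphism $GL(N,\mathbb F)\to\overline{\mathbb F}^\star$ sending ${\rm diag}(\lambda_1,\dots,\lambda_N)$ to the class of $\lambda_1\star\cdots\star\lambda_N$, extended by the value $[0]$ on non-invertible matrices. Here ${\rm Det}^*_N$ is this determinant over $\mathcal L$; for a matrix with entries in $\mathbb{H}[q]$ its value has a slice regular polynomial representative, unique up to commutators, with which it is identified. Regular resultants: let $P=\sum_{k=0}^nq_1^kP_k(q_2)$, $Q=\sum_{k=0}^mq_1^kQ_k(q_2)$. The Sylvester matrix $A(q_2)$ is the $(n+m)\times(n+m)$ matrix whose $j$-th column ($1\le j\le m$) has entries $P_0,\dots,P_n$ in rows $j,\dots,j+n$ and zeros elsewhere, and whose $(m+j)$-th column ($1\le j\le n$) has entries $Q_0,\dots,Q_m$ in rows $j,\dots,j+m$ and zeros elsewhere; ${\rm Res}(P,Q;q_1):={\rm Det}^*_{n+m}(A(q_2))$. Likewise, with $P=\sum_{k=0}^rq_2^k*\tilde P_k(q_1)$, $Q=\sum_{k=0}^sq_2^k*\tilde Q_k(q_1)$, $B(q_1)$ is the $(r+s)\times(r+s)$ matrix built in the same way from $\tilde P_0,\dots,\tilde P_r$ (first $s$ columns) and $\tilde Q_0,\dots,\tilde Q_s$ (last $r$ columns), and ${\rm Res}(P,Q;q_2):={\rm Det}^*_{r+s}(B(q_1))$.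 ''${\rm Res}\equiv0$'' means it is the zero polynomial (zero class). *)

From HB Require Import structures.
From mathcomp Require Import all_boot all_order all_algebra.
From mathcomp Require Import ring.
From mathcomp Require Import reals.
Set Implicit Arguments. Unset Strict Implicit. Unset Printing Implicit Defensive.
Import Order.TTheory GRing.Theory Num.Theory.
Local Open Scope ring_scope.

Record quat (R : Type) := Quat { qr : R; qi : R; qj : R; qk : R }.

Section Quaternions.
Variable R : comNzRingType.

Definition quat_tuple (x : quat R) := (qr x, qi x, qj x, qk x).
Definition tuple_quat (t : R * R * R * R) := let: (a, b, c, d) := t in Quat a b c d.
Lemma quat_tupleK : cancel quat_tuple tuple_quat. Proof. by case. Qed.

HB.instance Definition _ := Choice.copy (quat R) (can_type quat_tupleK).

Definition qzero := Quat (0 : R) 0 0 0.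
Definition qone := Quat (1 : R) 0 0 0.
Definition qopp (x : quat R) := Quat (- qr x) (- qi x) (- qj x) (- qk x).
Definition qadd (x y : quat R) :=
  Quat (qr x + qr y) (qi x + qi y) (qj x + qj y) (qk x + qk y).
Definition qmul (x y : quat R) :=
  let: Quat a0 a1 a2 a3 := x in let: Quat b0 b1 b2 b3 := y in
  Quat (a0 * b0 - a1 * b1 - a2 * b2 - a3 * b3)
       (a0 * b1 + a1 * b0 + a2 * b3 - a3 * b2)
       (a0 * b2 - a1 * b3 + a2 * b0 + a3 * b1)
       (a0 * b3 + a1 * b2 - a2 * b1 + a3 * b0).

Lemma qaddA : associative qadd.
Proof. by case=> ????; case=> ????; case=> ????; rewrite /qadd /=; congr Quat; ring. Qed.
Lemma qaddC : commutative qadd.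
Proof. by case=> ????; case=> ????; rewrite /qadd /=; congr Quat; ring. Qed.
Lemma qadd0 : left_id qzero qadd.
Proof. by case=> ????; rewrite /qadd /=; congr Quat; ring. Qed.
Lemma qaddN : left_inverse qzero qopp qadd.
Proof. by case=> ????; rewrite /qadd /=; congr Quat; ring. Qed.

HB.instance Definition _ := GRing.isZmodule.Build (quat R) qaddA qaddC qadd0 qaddN.

Lemma qmulA : associative qmul.
Proof. by case=> ????; case=> ????; case=> ????; rewrite /qmul /=; congr Quat; ring. Qed.
Lemma qmul1 : left_id qone qmul.
Proof. by case=> ????; rewrite /qmul /=; congr Quat; ring. Qed.
Lemma qmulr1 : right_id qone qmul.
Proof. by case=> ????; rewrite /qmul /=; congr Quat; ring. Qed.
Lemma qmulDl : left_distributive qmul qadd.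
Proof. by case=> ????; case=> ????; case=> ????; rewrite /qmul /qadd /=; congr Quat; ring. Qed.
Lemma qmulDr : right_distributive qmul qadd.
Proof. by case=> ????; case=> ????; case=> ????; rewrite /qmul /qadd /=; congr Quat; ring. Qed.
Lemma qone_neq0 : qone != 0 :> quat R.
Proof.
apply/eqP => /(congr1 (@qr R)) /=. rewrite /GRing.zero /=. by move/eqP; rewrite oner_eq0.
Qed.

HB.instance Definition _ :=
  GRing.Zmodule_isNzRing.Build (quat R) qmulA qmul1 qmulr1 qmulDl qmulDr qone_neq0.

End Quaternions.

Notation H R := (quat (R : realType)).

(*  H[q]      := {poly H}  (ring product of {poly _} = the *-product)  *)
(*  H[q1,q2]  := {poly {poly H}} : P = \sum_k q1^k P_k(q2), where the  *)
(*  outer variable is q1 and P_k = P`_k \in H[q2].  The ring product of *)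
(*  {poly {poly H}} is exactly the two-variable *-product.            *)
(*  swapXY P is the rewriting P = \sum_k q2^k * tilde P_k(q1), i.e.    *)
(*  (swapXY P)`_k = tilde P_k.                                         *)

(* Sylvester matrix of p = \sum_{k<=n} X^k p_k, q = \sum_{k<=m} X^k q_k,
   n = deg p, m = deg q (size = deg + 1); 0-indexed version of the paper's:
   column c < m holds p_0..p_n in rows c..c+n; column m + c' (c' < n)
   holds q_0..q_m in rows c'..c'+m. *)
Definition sylvester (A : nzRingType) (p q : {poly A}) :
    'M[A]_((size p).-1 + (size q).-1) :=
  let m := (size q).-1 in
  \matrix_(i, j)
    if (j < m)%N then (if (j <= i)%N then p`_(i - j) else 0)
    else (if (j - m <= i)%N then q`_(i - (j - m)) else 0).

Definition skew_field_of_quotients (A : nzRingType) (L : unitRingType)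
    (phi : {rmorphism {poly A} -> L}) : Prop :=
  [/\ injective phi,
      (forall x : L, x != 0 -> x \is a GRing.unit),
      (forall x : L, exists a b, b != 0 /\ x = phi a * (phi b)^-1) &
      (forall x : L, exists a b, b != 0 /\ x = (phi b)^-1 * phi a)].

(* Det^*_N(M) is, by definition, the class [0] exactly when M is not in
   GL(N, L); otherwise it lies in the abelianized unit group.  So
   "Det^*_N(M) == 0" means: M (viewed over L) is not invertible. *)
Definition DetStar_eq0 (A : nzRingType) (L : unitRingType)
    (phi : {rmorphism {poly A} -> L}) (N : nat) (M : 'M[{poly A}]_N) : Prop :=
  ~ exists B : 'M[L]_N, map_mx phi M *m B = 1%:M /\ B *m map_mx phi M = 1%:M.

Definition Res_q1_eq0 (A : nzRingType) (L : unitRingType)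
    (phi : {rmorphism {poly A} -> L}) (P Q : {poly {poly A}}) : Prop :=
  DetStar_eq0 phi (sylvester P Q).
Definition Res_q2_eq0 (A : nzRingType) (L : unitRingType)
    (phi : {rmorphism {poly A} -> L}) (P Q : {poly {poly A}}) : Prop :=
  DetStar_eq0 phi (sylvester (swapXY P) (swapXY Q)).

Definition q1_minus (A : nzRingType) (a : A) : {poly {poly A}} := 'X - (a%:P)%:P.
Definition q2_minus (A : nzRingType) (b : A) : {poly {poly A}} := ('X - b%:P)%:P.

From HB Require Import structures.
From mathcomp Require Import all_boot all_order all_algebra.
From mathcomp Require Import reals zify.
Set Implicit Arguments.
Unset Strict Implicit.
Unset Printing Implicit Defensive.
Import GRing.Theory.
Local Open Scope ring_scope.

(* The columns of the Sylvester matrix of P and Q are the coefficient vectors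
   of q1^j P and q1^j Q.  Left evaluation at c, p |-> sum_i c^i p_i, kills every
   left multiple (q1 - c) G of q1 - c by telescoping, and q1^j (q1 - c) G is
   again such a multiple because q1 is central.  So the row (1, c, c^2, ...)
   lies in the left kernel of the Sylvester matrix; its image under phi keeps
   the entry 1, so the Sylvester matrix cannot become invertible over L.  This
   uses only that phi is a unital ring morphism into a nonzero ring, not that L
   is the skew field of quotients.  Part (2) reduces to part (1) through
   swapXY, which exchanges q1 and q2. *)

Section LeftEvaluation.
Variables (A : nzRingType) (c : A).

Lemma size_XsubC_mul (G : {poly A}) : (size (('X - c%:P) * G)).-1 = size G.
Proof.
have [->|nzG] := eqVneq G 0; first by rewrite mulr0 size_poly0.
by rewrite size_monicM ?monicXsubC // size_XsubC.
Qed.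

Lemma sum_expr_coef_XsubC_mul (G : {poly A}) n :
  \sum_(i < n.+1) c ^+ i * (('X - c%:P) * G)`_i = - (c ^+ n.+1 * G`_n).
Proof.
elim: n => [|n IHn].
  by rewrite big_ord_recr big_ord0 /= mulrBl coefB coefXM coefCM /= mul1r !sub0r.
rewrite big_ord_recr /= IHn mulrBl coefB coefXM coefCM /= mulrBr mulrA -exprSr.
by rewrite addrA addNr sub0r.
Qed.

Lemma sum_expr_coef_XsubC_mul_eq0 (G : {poly A}) n : (size G < n)%N ->
  \sum_(i < n) c ^+ i * (('X - c%:P) * G)`_i = 0.
Proof.
case: n => [//|n]; rewrite ltnS => sizeG.
by rewrite sum_expr_coef_XsubC_mul nth_default ?mulr0 ?oppr0.
Qed.

Lemma sum_expr_coef_XnM_XsubC_mul (G : {poly A}) j n : (size G + j < n)%N ->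
  \sum_(i < n) c ^+ i * ('X^j * (('X - c%:P) * G))`_i = 0.
Proof.
move=> sizeG; rewrite mulrA -(commr_polyXn ('X - c%:P)) -mulrA.
apply: sum_expr_coef_XsubC_mul_eq0; apply: leq_ltn_trans (size_polyMleq _ _) _.
by rewrite size_polyXn addSn addnC.
Qed.

End LeftEvaluation.

Lemma sylvesterE (A : nzRingType) (p q : {poly A}) i j :
  sylvester p q i j =
  if (j < (size q).-1)%N then ('X^j * p)`_i else ('X^(j - (size q).-1) * q)`_i.
Proof. by rewrite mxE !coefXnM !ltnNge; case: ifP; case: ifP. Qed.

Lemma powers_mulmx_sylvester_XsubC (A : nzRingType) (c : A) (G G' : {poly A}) :
  (\row_i c ^+ i) *m sylvester (('X - c%:P) * G) (('X - c%:P) * G') = 0.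
Proof.
apply/rowP => j; rewrite !mxE.
have ltjN := ltn_ord j.
have sizeP := size_XsubC_mul c G; have sizeQ := size_XsubC_mul c G'.
case: (ltnP j (size (('X - c%:P) * G')).-1) => [ltjm|lemj].
  under eq_bigr => i _ do rewrite mxE sylvesterE ltjm.
  by apply: sum_expr_coef_XnM_XsubC_mul; lia.
under eq_bigr => i _ do rewrite mxE sylvesterE ltnNge lemj.
by apply: sum_expr_coef_XnM_XsubC_mul; lia.
Qed.

Lemma DetStar_eq0_left_kernel (A : nzRingType) (L : unitRingType)
    (phi : {rmorphism {poly A} -> L}) N (M : 'M[{poly A}]_N) (v : 'rV_N) i :
  v *m M = 0 -> v 0 i = 1 -> DetStar_eq0 phi M.
Proof.
move=> vM0 vi1 [B [MB1 _]].
have phi_v0 : map_mx phi v = 0.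
  by rewrite -[map_mx phi v]mulmx1 -MB1 mulmxA -map_mxM vM0 map_mx0 mul0mx.
by move/matrixP: phi_v0 => /(_ 0 i) /eqP; rewrite !mxE vi1 rmorph1 oner_eq0.
Qed.

Lemma Res_q1_eq0_XsubC_mul (A : nzRingType) (L : unitRingType)
    (phi : {rmorphism {poly A} -> L}) (c : {poly A}) (G G' : {poly {poly A}}) :
  ~ (G = 0 /\ G' = 0) ->
  Res_q1_eq0 phi (('X - c%:P) * G) (('X - c%:P) * G').
Proof.
move=> nzGG'; rewrite /Res_q1_eq0.
have N_gt0 : (0 < (size (('X - c%:P) * G)%R).-1 + (size (('X - c%:P) * G')%R).-1)%N.
  rewrite !size_XsubC_mul addn_gt0 !size_poly_gt0.
  by case: eqP => [G0|//]; case: eqP => [G'0|//]; case: nzGG'.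
apply: (@DetStar_eq0_left_kernel _ _ phi _ _ _ (Ordinal N_gt0)
  (powers_mulmx_sylvester_XsubC c G G')).
by rewrite mxE expr0.
Qed.

Lemma swapXY_q2_minus (A : nzRingType) (b : A) : swapXY (q2_minus b) = q1_minus b.
Proof. by rewrite swapXY_polyC map_polyXsubC. Qed.

Theorem proposition4p7 (R : realType) (L : unitRingType)
    (phi : {rmorphism {poly H R} -> L}) :
  skew_field_of_quotients phi ->
  forall (P Q : {poly {poly H R}}) (a b : H R),
    ~ (P = 0 /\ Q = 0) ->
    ((exists P1 Q1 : {poly {poly H R}},
        P = q1_minus a * P1 /\ Q = q1_minus a * Q1) -> Res_q1_eq0 phi P Q) /\
    ((exists P2 Q2 : {poly {poly H R}},
        P = q2_minus b * P2 /\ Q = q2_minus b * Q2) -> Res_q2_eq0 phi P Q).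
Proof.
move=> _ P Q a b nzPQ; split=> -[F [G [PE QE]]]; rewrite {}PE {}QE in nzPQ *.
  by apply: Res_q1_eq0_XsubC_mul => -[F0 G0]; apply: nzPQ; rewrite F0 G0 !mulr0.
rewrite /Res_q2_eq0 !rmorphM /= swapXY_q2_minus.
apply: Res_q1_eq0_XsubC_mul => -[/eqP F0 /eqP G0]; apply: nzPQ.
by move: F0 G0; rewrite !swapXY_eq0 => /eqP-> /eqP->; rewrite !mulr0.
Qed.
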